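(* Let $F \leq F' \leq \hat F \leq \mathrm{Sym}(\Omega)$ be permutation groups (so $F'$ stabilizes the orbits of $F$), and assume that for every $a\in\Omega$ the point stabilizer $F_a$ is equal to its normalizer in $F'_a$. Then for every compact open subgroup $K$ of $U(F)$, one has $\mathrm{Comm}_{U(F')}(K) = G(F,F')$.
   Context: Standing notation. $\Omega$ is a finite set with $d=|\Omega|\geq 3$, $\mathcal{T}_d$ is the $d$-regular tree with vertex set $V$ and set $E$ of non-oriented edges, and $\mathrm{Aut}(\mathcal{T}_d)$ carries the permutation topology. Fix a coloring $c:E\to\Omega$ such that for every vertex $v$ its restriction $c_v$ to the set $E(v)$ of edges containing $v$ is a bijection onto $\Omega$. For $g\in\mathrm{Aut}(\mathcal{T}_d)$ and $v\in V$, the local permutation is $\sigma(g,v)=c_{gv}\circ g_v\circ c_v^{-1}\in\mathrm{Sym}(\Omega)$, where $g_v:E(v)\to E(gv)$ is induced by $g$. For $F\leq\mathrm{Sym}(\Omega)$: $U(F)=\{g:\sigma(g,v)\in F \ \forall v\}$ (a closed subgroup of $\mathrm{Aut}(\mathcal{T}_d)$, with the induced topology); $G(F)=\{g:\sigma(g,v)\in F \text{ for all but finitely many } v\}$; $\hat F$ is the subgroup of permutations preserving each $F$-orbit. For $F\leq F'\leq\hat F$, $G(F,F')=G(F)\cap U(F')$. $F_a$, $F'_a$ are stabilizers of $a$. For a profinite group $K$ contained in a group $L$, the relative commensurator $\mathrm{Comm}_L(K)$ is the set of $g\in L$ such that there are open subgroups $K_1,K_2\leq K$ with $gK_1g^{-1}=K_2$.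 *)

From HB Require Import structures.
From mathcomp Require Import all_boot all_fingroup.
From Stdlib Require Import Relations.Relation_Operators.
From Stdlib Require List.

Set Implicit Arguments.
Unset Strict Implicit.
Unset Printing Implicit Defensive.

Section TreeDefs.

Variables (V : Type) (adj : V -> V -> Prop).

Definition simple_graph : Prop :=
  (forall u w, adj u w -> adj w u) /\ (forall u, ~ adj u u).

Definition connected : Prop := forall u w, clos_refl_trans V adj u w.

(* No closed walk f 0, ..., f n = f 0 (n >= 1) without (internal) backtracking;
   for a simple graph this is equivalent to having no cycle. *)
Definition acyclic : Prop :=
  forall (n : nat) (f : nat -> V), (0 < n)%N -> f n = f 0 ->
    (forall i, (i < n)%N -> adj (f i) (f i.+1)) ->
    exists i, (i.+2 <= n)%N /\ f i = f i.+2.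

Definition is_tree : Prop := simple_graph /\ connected /\ acyclic.

Variable Omega : finType.
Variable c : V -> V -> Omega.   (* colour of the edge {u,w} (meaningful when adj u w) *)

Definition legal_coloring : Prop :=
  (forall u w, adj u w -> c u w = c w u) /\
  (forall v (a : Omega), exists w, (adj v w /\ c v w = a) /\
       forall w', adj v w' /\ c v w' = a -> w' = w).

Definition is_aut (g : V -> V) : Prop :=
  bijective g /\ forall u w, adj u w <-> adj (g u) (g w).

(* sigma(g,v) \in F, where sigma(g,v) = c_{gv} o g_v o c_v^{-1}. *)
Definition local_perm_in (F : {set {perm Omega}}) (g : V -> V) (v : V) : Prop :=
  exists2 p, p \in F & forall w, adj v w -> c (g v) (g w) = p (c v w).

Definition finite_set (P : V -> Prop) : Prop :=
  exists s : seq V, forall v, P v -> List.In v s.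

Definition U_ (F : {set {perm Omega}}) (g : V -> V) : Prop :=
  is_aut g /\ forall v, local_perm_in F g v.

Definition G_ (F : {set {perm Omega}}) (g : V -> V) : Prop :=
  is_aut g /\ finite_set (fun v => ~ local_perm_in F g v).

Definition G2_ (F F' : {set {perm Omega}}) (g : V -> V) : Prop :=
  G_ F g /\ U_ F' g.

Definition agree_on (g h : V -> V) (S : seq V) : Prop :=
  forall v, List.In v S -> g v = h v.

Definition open_in (X O : (V -> V) -> Prop) : Prop :=
  (forall g, O g -> X g) /\
  forall g, O g -> exists S : seq V, forall h, X h -> agree_on h g S -> O h.

Definition compact (K : (V -> V) -> Prop) : Prop :=
  forall (I : Type) (O : I -> (V -> V) -> Prop),
    (forall i, open_in K (O i)) ->
    (forall g, K g -> exists i, O i g) ->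
    exists J : seq I, forall g, K g -> exists i, List.In i J /\ O i g.

Definition subgroup_of (X K : (V -> V) -> Prop) : Prop :=
  (forall g, K g -> X g) /\ K (fun v => v) /\
  (forall g h, K g -> K h -> K (fun v => g (h v))) /\
  (forall g, K g -> exists2 h, K h &
      (forall v, g (h v) = v) /\ (forall v, h (g v) = v)).

Definition Comm (L K : (V -> V) -> Prop) (g : V -> V) : Prop :=
  L g /\ exists K1 K2 : (V -> V) -> Prop,
    subgroup_of K K1 /\ open_in K K1 /\ subgroup_of K K2 /\ open_in K K2 /\
    forall k, K2 k <-> exists2 h, K1 h & forall v, k (g v) = g (h v).

End TreeDefs.

Definition hatF (Omega : finType) (F : {set {perm Omega}}) : {set {perm Omega}} :=
  [set p : {perm Omega} | [forall a, p a \in orbit 'P F a]].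

From HB Require Import structures.
From mathcomp Require Import all_boot all_fingroup zify.
From Stdlib Require Import ClassicalEpsilon Classical Relations Operators_Properties.
From Stdlib Require List.

Set Implicit Arguments.
Unset Strict Implicit.
Unset Printing Implicit Defensive.

(** For g in U(F') and a vertex u entered from the base vertex by an edge of
   colour a, twisting the branch beyond u by x in F_a gives h in U(F) fixing
   every vertex off that branch, and the local permutation of g h g^-1 at g u
   is s x s^-1, where s = sigma(g,u).  If g commensurates K, then for all u off
   the finitely many geodesics to the points that K and its open subgroups must
   fix, such h lie in the open subgroup that g conjugates into K, whence
   s F_a s^-1 <= F.  As F' preserves the F-orbits and F_a is self-normalising in
   F'_a, this forces s in F, so g is in G(F).  Conversely, if g is in G(F), it
   conjugates the pointwise stabiliser in K of a large enough finite set B onto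
   that of g B: away from the bad vertices of g the local permutations of
   g h g^-1 are products of elements of F, and near them h is the identity. *)

Local Open Scope group_scope.

Lemma mem_of_conj_stab_subset (Omega : finType) (F F' : {group {perm Omega}})
    (a : Omega) (s : {perm Omega}) :
  F \subset F' -> F' \subset hatF F ->
  'N_('C_F'[a | 'P])('C_F[a | 'P]) = 'C_F[a | 'P] ->
  s \in F' -> 'C_F[a | 'P] :^ s \subset F -> s \in F.
Proof.
move=> sFF' sF'hat selfN sF' sFaJs.
have /orbitP [f fF fa] : s a \in orbit 'P F a.
  by move: (subsetP sF'hat s sF'); rewrite inE => /forallP.
pose t := s * f^-1.
have tCa : t \in 'C_F'[a | 'P].
  rewrite inE groupM ?groupV ?(subsetP sFF' f fF) //=.
  by apply/astab1P; rewrite /= apermE permM -fa /= apermE permK.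
have FaJt : 'C_F[a | 'P] :^ t \subset 'C_F[a | 'P].
  apply/subsetP => _ /imsetP [x xFa ->].
  have xsF : x ^ s \in F by apply: (subsetP sFaJs); apply: imset_f.
  have /setIP [_ xCa] := xFa; have /setIP [_ tCa'] := tCa.
  by rewrite inE conjgM groupJ ?groupV //= -conjgM groupJ.
have tN : t \in 'N('C_F[a | 'P]).
  by apply/normP/eqP; rewrite eqEcard FaJt cardJg leqnn.
have /setIP [tF _] : t \in 'C_F[a | 'P] by rewrite -selfN inE tCa.
by rewrite -(mulgKV f s) groupM.
Qed.

Close Scope group_scope.

Lemma In_of_mem (T : eqType) (y : T) (s : seq T) : y \in s -> List.In y s.
Proof.
elim: s => [//|z s IH]; rewrite in_cons => /orP [/eqP ->|ys]; [by left | right; exact: IH].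
Qed.

Lemma suffix_cons_eq (T : eqType) (p l : seq T) b :
  suffix p (b :: l) -> ~~ suffix p l -> p = b :: l.
Proof.
move=> /suffixP [[|s0 s'] /= E] N; first by rewrite E.
by case: E => _ E; rewrite E suffix_suffix in N.
Qed.

Section Tree.
Variables (V : Type) (adj : V -> V -> Prop) (Omega : finType) (c : V -> V -> Omega).
Hypothesis Htree : is_tree adj.
Hypothesis Hcol : legal_coloring adj c.

Definition nbr (v : V) (a : Omega) : V :=
  proj1_sig (constructive_indefinite_description _ (Hcol.2 v a)).

Lemma nbrP v a : (adj v (nbr v a) /\ c v (nbr v a) = a) /\
  (forall w, adj v w /\ c v w = a -> w = nbr v a).
Proof. by rewrite /nbr; case: constructive_indefinite_description. Qed.

Lemma adj_nbr v a : adj v (nbr v a). Proof. by case: (nbrP v a) => [[]]. Qed.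
Lemma col_nbr v a : c v (nbr v a) = a. Proof. by case: (nbrP v a) => [[]]. Qed.
Lemma nbr_col v w : adj v w -> nbr v (c v w) = w.
Proof. by move=> vw; case: (nbrP v (c v w)) => _ E; rewrite -(E w). Qed.

Lemma adj_sym u w : adj u w -> adj w u.
Proof. by case: Htree => [[H _] _]; apply: H. Qed.

Lemma col_sym u w : adj u w -> c u w = c w u.
Proof. by case: Hcol => H _; apply: H. Qed.

Lemma nbrK a : involutive (nbr^~ a).
Proof.
move=> v; have vw := adj_nbr v a.
by rewrite -[in RHS](nbr_col (adj_sym vw)) -col_sym // col_nbr.
Qed.

Lemma nbr_nbr_eq w b b' : nbr (nbr w b) b' = w -> b = b'.
Proof.
move=> E; have wv := adj_nbr w b.
by rewrite -(col_nbr (nbr w b) b') E -col_sym // col_nbr.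
Qed.

(** A vertex is addressed from a base vertex by a colour word: [walk z l]
   follows the colours of [l] from its last letter to its first. *)
Definition walk (z : V) (l : seq Omega) : V := foldr (fun b y => nbr y b) z l.

Definition reduced (l : seq Omega) := sorted (fun a b : Omega => a != b) l.

Lemma walk_cat z l1 l2 : walk z (l1 ++ l2) = walk (walk z l2) l1.
Proof. by rewrite /walk foldr_cat. Qed.

Lemma walk_rev z l : walk (walk z l) (rev l) = z.
Proof.
elim: l z => [//|b l IH] z.
by rewrite rev_cons -cats1 walk_cat /= nbrK IH.
Qed.

Lemma reduced_drop j l : reduced l -> reduced (drop j l).
Proof. by elim: l j => [|b l IH] [|j] //= /path_sorted; apply: IH. Qed.

Lemma reduced_rev l : reduced l -> reduced (rev l).
Proof.
rewrite /reduced rev_sorted; case: l => //= x s.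
by rewrite (@eq_path _ _ (fun a b : Omega => a != b)) // => a b; rewrite eq_sym.
Qed.

Lemma reduced_walk_open z L : L != [::] -> reduced L -> walk z L <> z.
Proof.
case EL: L => [//|d L1] _; rewrite -EL => RL WL.
case: Htree => _ [_ Hac].
pose n := size L; pose f i := walk z (drop (n - i) L).
have n_gt0 : (0 < n)%N by rewrite /n EL.
have fS i : (i < n)%N -> f i.+1 = nbr (f i) (nth d L (n - i.+1)).
  move=> lt_i_n; rewrite /f.
  have -> : n - i = (n - i.+1).+1 by lia.
  by rewrite (drop_nth d) //; rewrite /n in lt_i_n *; lia.
have [i [lt_i2_n E]] : exists i, (i.+2 <= n)%N /\ f i = f i.+2.
  apply: Hac => //; first by rewrite /f subnn drop0 subn0 drop_size.
  by move=> i lt_i_n; rewrite fS //; apply: adj_nbr.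
rewrite fS // fS 1?ltnW // in E.
have Eb := nbr_nbr_eq (esym E).
have := reduced_drop (n - i.+2) RL.
rewrite (drop_nth d); last by rewrite /n; lia.
rewrite (drop_nth d); last by rewrite /n; lia.
have -> : (n - i.+2).+1 = n - i.+1 by lia.
by rewrite Eb /= eqxx.
Qed.

Lemma walk_inj v0 l1 l2 :
  reduced l1 -> reduced l2 -> walk v0 l1 = walk v0 l2 -> l1 = l2.
Proof.
elim: l1 l2 => [|b1 q1 IH] [|b2 q2] // R1 R2 E.
- by case: (@reduced_walk_open v0 (b2 :: q2)).
- by case: (@reduced_walk_open v0 (b1 :: q1)).
have [eb|neb] := eqVneq b1 b2.
  subst b2; congr (_ :: _); apply: IH; [exact: path_sorted R1 | exact: path_sorted R2 |].
  exact: (inv_inj (nbrK b1)).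
case: (@reduced_walk_open v0 (rev (b2 :: q2) ++ b1 :: q1)).
- by case: (rev _).
- rewrite rev_cons -cats1 -catA /= /reduced sorted_cat_cons -rev_cons.
  by rewrite -/(reduced _) reduced_rev //= eq_sym neb.
- by rewrite walk_cat E walk_rev.
Qed.

Definition push (l : seq Omega) (b : Omega) :=
  if l is b' :: q then (if b' == b then q else b :: l) else [:: b].

Lemma walk_push z l b : walk z (push l b) = nbr (walk z l) b.
Proof. by case: l => [//|b' q] /=; case: eqP => [->|_] //=; rewrite nbrK. Qed.

Lemma reduced_push l b : reduced l -> reduced (push l b).
Proof.
case: l => [//|b' q] /= R; case: eqP => [_|ne]; first exact: path_sorted R.
by rewrite /reduced /= R andbT; apply/eqP => E; apply: ne; rewrite E.
Qed.

Lemma walk_surj v0 w : exists l, reduced l /\ walk v0 l = w.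
Proof.
case: Htree => _ [Hc _].
elim: (clos_rt_rtn1 _ _ _ _ (Hc v0 w)) => [|y z yz _ [l [Rl Wl]]].
  by exists [::].
exists (push l (c y z)); split; first exact: reduced_push.
by rewrite walk_push Wl nbr_col.
Qed.

Definition word v0 w : seq Omega :=
  proj1_sig (constructive_indefinite_description _ (walk_surj v0 w)).

Lemma wordP v0 w : reduced (word v0 w) /\ walk v0 (word v0 w) = w.
Proof. by rewrite /word; case: constructive_indefinite_description. Qed.

Lemma reduced_word v0 w : reduced (word v0 w). Proof. by case: (wordP v0 w). Qed.
Lemma wordK v0 : cancel (word v0) (walk v0). Proof. by move=> w; case: (wordP v0 w). Qed.
Lemma walkK v0 l : reduced l -> word v0 (walk v0 l) = l.
Proof. by move=> R; apply: (@walk_inj v0); rewrite ?reduced_word ?wordK. Qed.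

Lemma word_nbr v0 w b : word v0 (nbr w b) = push (word v0 w) b.
Proof.
apply: (@walk_inj v0); rewrite ?reduced_word ?reduced_push ?reduced_word //.
by rewrite wordK walk_push wordK.
Qed.

(** The vertices strictly between [v0] and [s], and [s] itself. *)
Definition ancestors v0 s : seq V :=
  List.map (fun i => walk v0 (drop i (word v0 s))) (iota 0 (size (word v0 s))).

Lemma In_ancestors v0 u s :
  word v0 u != [::] -> suffix (word v0 u) (word v0 s) -> List.In u (ancestors v0 s).
Proof.
move=> nil_u /suffixP [r Er].
apply/List.in_map_iff; exists (size r); split; first by rewrite Er drop_size_cat // wordK.
apply: In_of_mem; rewrite mem_iota /= Er size_cat.
by case: (word v0 u) nil_u => //= *; lia.
Qed.

Definition nbhd (S : seq V) : seq V :=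
  List.flat_map (fun v => List.map (nbr v) (enum Omega)) S.

Lemma In_nbhd S v w : List.In v S -> adj v w -> List.In w (nbhd S).
Proof.
move=> Sv vw; apply/List.in_flat_map; exists v; split => //.
apply/List.in_map_iff; exists (c v w); split; first exact: nbr_col.
by apply: In_of_mem; rewrite mem_enum.
Qed.

Definition local_perm (g : V -> V) v (s : {perm Omega}) :=
  forall w, adj v w -> c (g v) (g w) = s (c v w).

Lemma local_perm_uniq g v s t : local_perm g v s -> local_perm g v t -> s = t.
Proof.
move=> Ls Lt; apply/permP => b.
by rewrite -{1 2}(col_nbr v b) -Ls ?Lt //; apply: adj_nbr.
Qed.

Lemma local_perm_ext f g v s : f =1 g -> local_perm g v s -> local_perm f v s.
Proof. by move=> E Ls w vw; rewrite !E Ls. Qed.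

Lemma local_perm1 h v :
  h v = v -> (forall w, adj v w -> h w = w) -> local_perm h v 1%g.
Proof. by move=> hv hN w vw; rewrite hv hN // perm1. Qed.

Lemma local_perm_comp f g v s t : is_aut adj g ->
  local_perm g v s -> local_perm f (g v) t -> local_perm (fun y => f (g y)) v (s * t)%g.
Proof.
by move=> [_ gA] Ls Lt w vw; rewrite permM -Ls // -Lt //; apply: (gA v w).1.
Qed.

Lemma local_perm_inv g gi v s : is_aut adj g -> cancel g gi -> cancel gi g ->
  local_perm g v s -> local_perm gi (g v) s^-1%g.
Proof.
move=> [_ gA] gK gKV Ls w gvw.
have vw : adj v (gi w) by apply/gA; rewrite gKV.
by rewrite gK -[in RHS](gKV w) Ls // permK.
Qed.

Lemma aut_inj g : is_aut adj g -> injective g.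
Proof. by case=> [[gi gK _] _]; apply: can_inj gK. Qed.

Lemma aut_comp f g : is_aut adj f -> is_aut adj g -> is_aut adj (fun v => f (g v)).
Proof.
move=> [[fi fK fKV] fA] [[gi gK gKV] gA]; split.
  by exists (fun v => gi (fi v)) => v /=; rewrite ?fK ?gK ?gKV ?fKV.
by move=> u w; rewrite gA fA.
Qed.

Lemma aut_inv g gi : is_aut adj g -> cancel g gi -> cancel gi g -> is_aut adj gi.
Proof.
move=> [_ gA] gK gKV; split; first by exists g.
by move=> u w; rewrite (gA (gi u) (gi w)) !gKV.
Qed.

Lemma aut_ext f g : f =1 g -> is_aut adj g -> is_aut adj f.
Proof.
move=> E [[gi gK gKV] gA]; split; first by exists gi => v; rewrite ?E // -E gKV.
by move=> u w; rewrite !E gA.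
Qed.

(** Twisting the branch beyond [walk v0 (a :: q)] by a permutation [x] of the
   colours fixing [a]: in every word running through that vertex, the letters
   beyond it are replaced by their images under [x]. *)
Section Twist.
Variables (v0 : V) (a : Omega) (q : seq Omega) (x : {perm Omega}).
Hypothesis xa : x a = a.
Let p := a :: q.

Definition twist (y : {perm Omega}) (l : seq Omega) :=
  if suffix p l then map y (take (size l - size p) l) ++ p else l.

Lemma twist_cat y r : twist y (r ++ p) = map y r ++ p.
Proof. by rewrite /twist suffix_suffix size_cat addnK take_size_cat. Qed.

Lemma twist_base y : twist y p = p.
Proof. exact: (twist_cat y [::]). Qed.

Lemma twist_out y l : ~~ suffix p l -> twist y l = l.
Proof. by rewrite /twist => /negbTE ->. Qed.

Definition twist_perm (l : seq Omega) : {perm Omega} :=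
  if suffix p l then x else 1%g.

Lemma twist_push l b : twist x (push l b) = push (twist x l) (twist_perm l b).
Proof.
rewrite /twist_perm; case: (boolP (suffix p l)) => S.
  case/suffixP: S => [[|b' r] ->] /=.
    rewrite twist_base /p /= -[X in X == x b]xa (inj_eq perm_inj).
    case: eqP => [_|_]; last exact: (twist_cat x [:: b]).
    rewrite twist_out //; apply/negP => /suffixP [s /(congr1 size)].
    by rewrite size_cat /p /=; lia.
  rewrite (twist_cat x (b' :: r)) /= (inj_eq perm_inj).
  by case: eqP => _; [rewrite twist_cat | exact: (twist_cat x [:: b, b' & r])].
rewrite perm1 (twist_out _ S).
have new_suffix l' : ~~ suffix p l' -> suffix p (b :: l') -> twist x (b :: l') = b :: l'.
  by move=> S1 S2; have := twist_cat x [::]; rewrite /= (suffix_cons_eq S2 S1).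
case: l S => [|b' l] S /=.
  by case: (boolP (suffix p [:: b])) => S2; [exact: new_suffix | rewrite twist_out].
case: eqP => _.
  by rewrite twist_out //; apply: contra S; rewrite -cat1s; apply: suffix_catr.
by case: (boolP (suffix p [:: b, b' & l])) => S2; [exact: new_suffix | rewrite twist_out].
Qed.

Lemma reduced_twist l : reduced l -> reduced (twist x l).
Proof.
case: (boolP (suffix p l)) => [/suffixP [r ->]|S]; last by rewrite twist_out.
rewrite twist_cat; elim: r => [//|b r IH] R /=.
move: R (IH (path_sorted R)); case: r {IH} => [|y t] /=.
  by rewrite /p /reduced /= -[X in x b != X]xa (inj_eq perm_inj) => /andP [-> _] ->.
by rewrite /reduced /= (inj_eq perm_inj) => /andP [-> _] ->.
Qed.

Lemma twistK l : twist x^-1 (twist x l) = l.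
Proof.
case: (boolP (suffix p l)) => [/suffixP [r ->]|S]; last by rewrite !twist_out.
by rewrite !twist_cat -map_comp (eq_map (permK x)) map_id.
Qed.

Definition twist_map (y : {perm Omega}) (z : V) := walk v0 (twist y (word v0 z)).

Lemma twist_map_nbr z b :
  twist_map x (nbr z b) = nbr (twist_map x z) (twist_perm (word v0 z) b).
Proof. by rewrite /twist_map word_nbr twist_push walk_push. Qed.

Lemma twist_mapK : cancel (twist_map x) (twist_map x^-1).
Proof.
move=> z; rewrite /twist_map walkK ?reduced_twist ?reduced_word //.
by rewrite twistK wordK.
Qed.

Lemma twist_map_out z : ~~ suffix p (word v0 z) -> twist_map x z = z.
Proof. by move=> S; rewrite /twist_map twist_out // wordK. Qed.

Lemma local_perm_twist_map z : local_perm (twist_map x) z (twist_perm (word v0 z)).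
Proof. by move=> w zw; rewrite -{1}(nbr_col zw) twist_map_nbr col_nbr. Qed.

Lemma twist_map_base z : word v0 z = p -> twist_map x z = z.
Proof. by move=> E; rewrite /twist_map E twist_base -E wordK. Qed.

Lemma adj_twist_map z w : adj z w -> adj (twist_map x z) (twist_map x w).
Proof. by move=> zw; rewrite -(nbr_col zw) twist_map_nbr; apply: adj_nbr. Qed.

End Twist.

Lemma twist_map_aut v0 a q (x : {perm Omega}) :
  x a = a -> is_aut adj (twist_map v0 a q x).
Proof.
move=> xa; have xVa : x^-1%g a = a by rewrite -{1}xa permK.
have K := twist_mapK v0 q xa; have KV := twist_mapK v0 q xVa; rewrite invgK in KV.
split; first by exists (twist_map v0 a q x^-1%g).
move=> z w; split; first exact: adj_twist_map.
by move=> /(adj_twist_map v0 q xVa); rewrite !K.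
Qed.

Lemma U_twist_map (F : {group {perm Omega}}) v0 a q x :
  x \in F -> x a = a -> U_ adj c F (twist_map v0 a q x).
Proof.
move=> xF xa; split; first exact: twist_map_aut.
move=> z; exists (twist_perm a q x (word v0 z)); last exact: local_perm_twist_map.
by rewrite /twist_perm; case: suffix.
Qed.

Section Conjugation.
Variables (F : {group {perm Omega}}) (g gi : V -> V).
Hypotheses (gaut : is_aut adj g) (gK : cancel g gi) (gKV : cancel gi g).

Lemma local_perm_in_inv v : local_perm_in adj c F g v -> local_perm_in adj c F gi (g v).
Proof. by move=> [s sF Ls]; exists s^-1%g; [rewrite groupV | exact: local_perm_inv Ls]. Qed.

(* Outside the bad set [Bd] of [g], the local permutations of [g f g^-1] are
   products of elements of [F]; near [Bd] it is the identity. *)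
Lemma U_conj (Bd : V -> Prop) f f' :
  (forall v, ~ Bd v -> local_perm_in adj c F g v) ->
  U_ adj c F f -> (forall v, Bd v -> f v = v) ->
  (forall v w, Bd v -> adj v w -> f w = w) ->
  (forall v, f' (g v) = g (f v)) -> U_ adj c F f'.
Proof.
move=> good [faut fF] fBd fN Ef'.
have Ef'' w : f' w = g (f (gi w)) by rewrite -{1}(gKV w) Ef'.
have giaut := aut_inv gaut gK gKV.
split; first by apply: aut_ext Ef'' _; do 2!apply: aut_comp => //.
move=> w; rewrite -(gKV w); set v := gi w.
have [Bv|nBv] := classic (Bd v).
  exists 1%g => //; apply: local_perm1; first by rewrite Ef' fBd.
  move=> w' gvw'; have vw' : adj v (gi w') by apply/(proj2 gaut v (gi w')); rewrite gKV.
  by rewrite -(gKV w') Ef' (fN v).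
have nBfv : ~ Bd (f v) by move=> /[dup] /fBd /(aut_inj faut) ->.
have [s sF Ls] := good v nBv; have [t tF Lt] := fF v; have [r rF Lr] := good _ nBfv.
exists (s^-1 * t * r)%g; first by rewrite !groupM ?groupV.
apply: local_perm_ext Ef'' _; apply: local_perm_comp (aut_comp faut giaut) _ _.
  by apply: local_perm_comp giaut (local_perm_inv gaut gK gKV Ls) _; rewrite gK.
by rewrite gK.
Qed.

End Conjugation.

Definition fixer (K : (V -> V) -> Prop) (S : seq V) (h : V -> V) :=
  K h /\ agree_on h (fun v => v) S.

Lemma subgroup_fixer X K S : subgroup_of X K -> subgroup_of K (fixer K S).
Proof.
move=> [_ [Kid [KM KV]]]; split; first by move=> h [].
split; first by split.
split=> [h1 h2 [h1K h1S] [h2K h2S]|h [hK hS]].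
  by split; [exact: KM | move=> v Sv /=; rewrite h2S // h1S].
have [h' h'K inv_h'] := KV _ hK.
by exists h' => //; split => // v Sv; rewrite -{1}(hS v Sv) inv_h'.2.
Qed.

Lemma open_fixer K S : open_in K (fixer K S).
Proof.
split=> [h []//|h [hK hS]].
by exists S => h' h'K E; split => // v Sv; rewrite E // hS.
Qed.

Lemma open_fixer_sub X K : subgroup_of X K -> open_in X K ->
  exists S, forall h, X h -> agree_on h (fun v : V => v) S -> K h.
Proof. by move=> [_ [Kid _]] [_ Kop]; exact: Kop _ Kid. Qed.

Section Commensurator.
Variables (F : {group {perm Omega}}) (K : (V -> V) -> Prop).
Hypotheses (Ksub : subgroup_of (U_ adj c F) K) (Kop : open_in (U_ adj c F) K).

Local Open Scope group_scope.

Lemma G2_of_Comm (F' : {group {perm Omega}}) (v0 : V) g :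
  F \subset F' -> F' \subset hatF F ->
  (forall a, 'N_('C_F'[a | 'P])('C_F[a | 'P]) = 'C_F[a | 'P]) ->
  Comm (U_ adj c F') K g -> G2_ adj c F F' g.
Proof.
move=> sFF' sF'hat selfN [[gaut gF'] [K1 [K2 [K1sub [K1op [K2sub [_ EK2]]]]]]].
do 2!split => //.
have [S0 HS0] := open_fixer_sub Ksub Kop.
have [S1 HS1] := open_fixer_sub K1sub K1op.
exists (v0 :: List.flat_map (ancestors v0) (S0 ++ S1)) => u bad_u.
apply: NNPP => nZ; apply: bad_u.
have [s sF' Ls] := gF' u.
case Eu: (word v0 u) => [|a q]; first by case: nZ; left; rewrite -(wordK v0 u) Eu.
exists s => //; apply: (mem_of_conj_stab_subset sFF' sF'hat (selfN a) sF').
apply/subsetP => _ /imsetP [x /setIP [xF /astab1P /= xa] ->]; rewrite apermE in xa.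
pose h := twist_map v0 a q x.
have hU : U_ adj c F h := U_twist_map v0 q xF xa.
have hfix v : List.In v (S0 ++ S1) -> h v = v.
  move=> Sv; apply: twist_map_out; apply/negP => S; apply: nZ; right.
  by apply/List.in_flat_map; exists v; split => //; apply: In_ancestors; rewrite ?Eu.
have hK1 : K1 h.
  apply: HS1 => [|v S1v]; last by apply: hfix; apply/List.in_app_iff; right.
  by apply: HS0 => // v S0v; apply: hfix; apply/List.in_app_iff; left.
have [gi gK gKV] := gaut.1.
pose k w := g (h (gi w)).
have kK2 : K2 k by apply/EK2; exists h => // v; rewrite /k gK.
have [t tF Lt] := (Ksub.1 _ (K2sub.1 _ kK2)).2 (g u).
(* [k g = g h] at [u], where their local permutations are [s * t] and [x * s]. *)
have Lx : local_perm h u x.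
  by have := local_perm_twist_map v0 q xa (z := u); rewrite Eu /twist_perm suffix_refl.
have Ls' : local_perm g (h u) s by rewrite /h twist_map_base.
have Eperm : s * t = x * s.
  apply: local_perm_uniq (local_perm_comp hU.1 Lx Ls').
  by apply: local_perm_ext (local_perm_comp gaut Ls Lt) => v /=; rewrite /k gK.
by rewrite conjgE -Eperm mulKg.
Qed.

Lemma Comm_of_G2 F' g : G2_ adj c F F' g -> Comm (U_ adj c F') K g.
Proof.
move=> [[gaut [Bd HBd]] U'g]; split => //.
have [gi gK gKV] := gaut.1; have giaut := aut_inv gaut gK gKV.
have good v : ~ List.In v Bd -> local_perm_in adj c F g v.
  by move=> nBv; apply: NNPP => /HBd.
have [S0 HS0] := open_fixer_sub Ksub Kop.
pose B := S0 ++ List.map gi S0 ++ Bd ++ nbhd Bd.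
have BdB v : List.In v Bd -> List.In v B.
  by move=> Bv; rewrite /B !List.in_app_iff; auto.
have NB v : List.In v (nbhd Bd) -> List.In v B.
  by move=> Nv; rewrite /B !List.in_app_iff; auto.
exists (fixer K B), (fixer K (List.map g B)).
do 2!(split; [exact: subgroup_fixer Ksub | split; first exact: open_fixer]).
move=> k; split.
- move=> [kK kgB].
  have k_gB v : List.In v B -> k (g v) = g v by move=> Bv; apply/kgB/List.in_map.
  pose h v := gi (k (g v)).
  have hB : agree_on h (fun v => v) B by move=> v Bv; rewrite /h k_gB ?gK.
  have hU : U_ adj c F h.
    apply: (U_conj giaut gKV gK (Bd := fun w => List.In (gi w) Bd) _ (Ksub.1 _ kK)).
    + move=> w nBw; rewrite -(gKV w).
      exact: (local_perm_in_inv gaut gK gKV (good _ nBw)).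
    + by move=> w /BdB Bw; rewrite -(gKV w) k_gB.
    + move=> w w' Bw ww'; rewrite -(gKV w') k_gB //; apply/NB/(In_nbhd Bw).
      exact: ((proj2 giaut w w').1 ww').
    + by move=> w; rewrite /h gKV.
  exists h; last by move=> v; rewrite /h gKV.
  split=> //; apply: HS0 => // v S0v; apply: hB.
  by rewrite /B List.in_app_iff; left.
- move=> [h [hK hB] Ekh].
  have kU : U_ adj c F k.
    apply: (U_conj gaut gK gKV (Bd := fun v => List.In v Bd) good (Ksub.1 _ hK)).
    + by move=> v /BdB /hB.
    + by move=> v w Bv /(In_nbhd Bv) /NB /hB.
    + exact: Ekh.
  have kgB : agree_on k (fun v => v) (List.map g B).
    by move=> _ /List.in_map_iff [v [<- Bv]]; rewrite Ekh hB.
  split=> //; apply: HS0 => // w S0w; apply: kgB; rewrite -(gKV w).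
  by apply/List.in_map; rewrite /B !List.in_app_iff; right; left; apply: List.in_map.
Qed.

End Commensurator.

End Tree.

Local Open Scope group_scope.

Theorem proposition1p8
  (Omega : finType) (V : Type) (adj : V -> V -> Prop) (c : V -> V -> Omega)
  (HV : inhabited V) (Htree : is_tree adj) (Hcol : legal_coloring adj c)
  (Hd : (3 <= #|Omega|)%N)
  (F F' : {group {perm Omega}})
  (HFF' : F \subset F') (HF'hat : F' \subset hatF F)
  (Hnorm : forall a : Omega,
      'N_('C_F'[a | 'P])('C_F[a | 'P]) = 'C_F[a | 'P])
  (K : (V -> V) -> Prop)
  (HKsub : subgroup_of (U_ adj c F) K)
  (HKopen : open_in (U_ adj c F) K)
  (HKcpt : compact K) :
  forall g : V -> V, Comm (U_ adj c F') K g <-> G2_ adj c F F' g.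
Proof.
have [v0] := HV; move=> g; split=> [Comm_g | G2_g].
- exact: (G2_of_Comm Htree Hcol HKsub HKopen v0 HFF' HF'hat Hnorm Comm_g).
- exact: (Comm_of_G2 Hcol HKsub HKopen G2_g).
Qed.
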